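(* For every $\omega\in(0,\infty)$, the pair $(G_c,g(0))$ is observable, where $g$ is the solution of the boundary value problem described in the context.
   Context: Let $a\in\mathbb{R}$, $\tau>0$, $G_c=\begin{bmatrix}0&\omega\\-\omega&0\end{bmatrix}$, $E$ the $2\times2$ identity, $\gamma_c=[1,0]$, $\phi_0\equiv1$, $\phi_n(x)=\sqrt2\cos(n\pi x)$ ($n\ge1$), $\mathcal L(x)=\sum_{n=0}^N\ell_n\phi_n(x)$, where for some $\delta>0$, $N\in\mathbb{N}$ satisfies $a-(n\pi)^2<-\delta$ for $n>N$ and $L=[\ell_0\ \ldots\ \ell_N]^\top$ is chosen so that a positive-definite $Q$ satisfies $Q(A+LC)+(A+LC)^\top Q<-2\delta Q$, with $A=\mathrm{diag}(a-(n\pi)^2)_{n=0}^N$, $C=[1\ \sqrt2\ \ldots\ \sqrt2]$. $g\in H^2((0,1);\mathbb{R}^{1\times2})$ is the solution of $g''(x)=g(x)(G_c-aE)-\mathcal L(x)g(0)$, $g'(0)=0$, $g'(1)=-\gamma_ce^{-G_c\tau}$. Observability of a pair $(M,c)$ with $M\in\mathbb{R}^{2\times2}$, $c\in\mathbb{R}^{1\times2}$ means the matrix with rows $c$, $cM$ has rank 2. *)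

From HB Require Import structures.
From mathcomp Require Import all_boot all_order all_algebra.
From mathcomp Require Import all_classical all_reals all_analysis.
Set Implicit Arguments. Unset Strict Implicit. Unset Printing Implicit Defensive.
Import Order.TTheory GRing.Theory Num.Theory.
Import numFieldNormedType.Exports.
Local Open Scope ring_scope.

Definition expm (R : realType) (n : nat) (M : 'M[R]_n.+1) : 'M[R]_n.+1 :=
  limn (fun m => \sum_(k < m) ((k`!)%:R^-1 *: M ^+ k)).

Definition Gc (R : realType) (omega : R) : 'M[R]_2 :=
  \matrix_(i < 2, j < 2)
    (if (i == 0) && (j == 1) then omega
     else if (i == 1) && (j == 0) then - omega else 0).

Definition gammac (R : realType) : 'rV[R]_2 := \row_(j < 2) (if j == 0 then 1 else 0).

Definition phi (R : realType) (n : nat) (x : R) : R :=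
  if n == 0%N then 1 else Num.sqrt 2 * cos (n%:R * pi * x).

Definition calL (R : realType) (N : nat) (L : 'cV[R]_N.+1) (x : R) : R :=
  \sum_(n < N.+1) L n 0 * phi n x.

Definition Amat (R : realType) (N : nat) (a : R) : 'M[R]_N.+1 :=
  diag_mx (\row_(n < N.+1) (a - (n%:R * pi) ^+ 2)).

Definition Cmat (R : realType) (N : nat) : 'rV[R]_N.+1 :=
  \row_(n < N.+1) (if n == ord0 then 1 else Num.sqrt 2).

Definition posdef (R : realType) (n : nat) (M : 'M[R]_n) : Prop :=
  M^T = M /\ forall v : 'cV[R]_n, v != 0 -> 0 < (v^T *m M *m v) 0 0.

Definition observable (R : realType) (M : 'M[R]_2) (c : 'rV[R]_2) : Prop :=
  \rank (col_mx c (c *m M)) = 2%N.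

From HB Require Import structures.
From mathcomp Require Import all_boot all_order all_algebra.
From mathcomp Require Import all_classical all_reals all_analysis.
From mathcomp Require Import ring lra.
Import Order.TTheory GRing.Theory Num.Theory.
Import numFieldNormedType.Exports.
Local Open Scope ring_scope.
Local Open Scope classical_set_scope.

(* If g(0) <> 0, the pair is observable because G_c is omega times a quarter
   turn: the matrix with rows c and c G_c has determinant omega |c|^2.
   If g(0) = 0, the equation becomes g'' = g (G_c - a) with g(0) = g'(0) = 0,
   so g vanishes on [0, 1] and g'(1) = 0; but g'(1) = -gamma_c e^(-G_c tau) is
   the negative of a unit vector, since e^(-G_c tau) is a rotation.
   Uniqueness for that Cauchy problem is a Gronwall-type argument on the sum V
   of the absolute values of the coordinates of g and g': on a short interval
   starting at a zero of V, the mean value theorem bounds the maximum of V by a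
   fraction of itself, so V vanishes there, and finitely many such intervals
   cover [0, 1]. *)

Lemma ler_psumr_term {R : numDomainType} {I : finType} (F : I -> R) i :
  (forall j, 0 <= F j) -> F i <= \sum_j F j.
Proof. by move=> F_ge0; rewrite (bigD1 i) //= lerDl sumr_ge0. Qed.

Lemma norm_mulmx_row_le {R : numDomainType} {m n} (v : 'rV[R]_m)
    (B : 'M[R]_(m, n)) j :
  `|(v *m B) 0 j| <= (\sum_k \sum_l `|B k l|) * \sum_k `|v 0 k|.
Proof.
rewrite mxE mulr_sumr; apply: le_trans (ler_norm_sum _ _ _) _.
apply: ler_sum => k _; rewrite normrM mulrC ler_wpM2r //.
apply: le_trans (ler_psumr_term (fun l => `|B k l|) j _) _ => //.
by apply: (ler_psumr_term (fun k => \sum_l `|B k l|)) => k'; exact: sumr_ge0.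
Qed.

Lemma within_continuous_coord {R : realType} {m n} (A : set R)
    (F : R -> 'M[R]_(m, n)) i j :
  {within A, continuous F} -> {within A, continuous (fun y => F y i j)}.
Proof.
move=> F_cont x.
have -> : (fun y => F y i j) = (fun M : 'M[R]_(m, n) => M i j) \o F by [].
by apply: continuous_cvg; [exact: coord_continuous | exact: F_cont].
Qed.

Lemma is_derive_coord {R : realType} {m n} (F : R -> 'M[R]_(m, n)) x i j :
  derivable F x 1 -> is_derive x 1 (fun y => F y i j) (F^`() x i j).
Proof.
move=> dF.
have coord_lim : (fun h : R => h^-1 *: (F (h *: 1 + x) i j - F x i j)) @ 0^'
    --> F^`() x i j.
  rewrite derive1E /derive.
  have -> : (fun h : R => h^-1 *: (F (h *: 1 + x) i j - F x i j)) =
      (fun M : 'M[R]_(m, n) => M i j) \o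
      (fun h : R => h^-1 *: ((F \o shift x) (h *: 1) - F x)).
    by apply/funext => h /=; rewrite !mxE.
  by apply: continuous_cvg; [exact: coord_continuous | exact: dF].
by apply: DeriveDef; [exact: cvgP coord_lim | exact: cvg_lim coord_lim].
Qed.

Section Gronwall.
Context {R : realType} {I : finType}.
Context {f df : I -> R -> R} {K : R}.
Hypothesis K_ge0 : 0 <= K.
Hypothesis f_cont : forall i, {within `[0, 1], continuous (f i)}.
Hypothesis f_deriv : forall i (x : R), 0 < x < 1 -> is_derive x 1 (f i) (df i x).
Hypothesis df_le :
  forall i (x : R), 0 < x < 1 -> `|df i x| <= K * \sum_j `|f j x|.
Hypothesis f0 : forall i, f i 0 = 0.

Let V x := \sum_i `|f i x|.

Let V_ge0 x : 0 <= V x. Proof. exact: sumr_ge0. Qed.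

Let f_eq0 x : V x = 0 -> forall i, f i x = 0.
Proof.
by move=> /psumr_eq0P V0 i; apply/normr0_eq0/V0.
Qed.

Let f_cont_sub i {s t : R} :
  0 <= s -> t <= 1 -> {within `[s, t], continuous (f i)}.
Proof.
by move=> s0 t1; apply: continuous_subspaceW (f_cont i); apply: subset_itv;
  rewrite bnd_simp.
Qed.

Let V_cont {s t : R} : 0 <= s -> t <= 1 -> {within `[s, t], continuous V}.
Proof.
move=> s0 t1; rewrite (_ : V = \sum_i (fun x => `|f i x|)); last first.
  by rewrite fct_sumE.
apply: (big_ind (fun h => {within `[s, t], continuous h})).
- by move=> x; exact: cvg_cst.
- by move=> h1 h2 c1 c2 x; exact: cvgD (c1 x) (c2 x).
- by move=> i _ x; apply: cvg_norm; exact: f_cont_sub.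
Qed.

Let V_eq0_step {s t : R} : 0 <= s -> s <= t -> t <= 1 ->
  #|I|%:R * K * (t - s) < 1 -> V s = 0 -> V t = 0.
Proof.
move=> s0 st t1 small /f_eq0 fs0.
have [c cst Vmax] := EVT_max st (V_cont s0 t1).
have f_le i x : x \in `[s, t]%R -> `|f i x| <= K * V c * (t - s).
  rewrite in_itv /= => /andP[]; rewrite le_eqVlt => /predU1P[<- _|sx xt].
    by rewrite fs0 normr0 !mulr_ge0 ?subr_ge0.
  have y01 y : y \in `]s, x[%R -> 0 < y < 1.
    rewrite in_itv /= => /andP[sy yx].
    by rewrite (le_lt_trans s0 sy) (lt_le_trans yx (le_trans xt t1)).
  have [y ysx] := MVT sx (fun y ysx => f_deriv i y (y01 y ysx))
    (f_cont_sub i s0 (le_trans xt t1)).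
  rewrite fs0 subr0 => ->.
  rewrite normrM [`|x - s|]ger0_norm ?subr_ge0 ?(ltW sx) //.
  apply: ler_pM; rewrite ?subr_ge0 ?(ltW sx) ?lerD2r //.
  apply: le_trans (df_le i y (y01 y ysx)) _; rewrite ler_wpM2l // Vmax //.
  move: ysx cst; rewrite !in_itv /= => /andP[sy yx] _.
  by rewrite !ltW // (lt_le_trans yx xt).
have Vc_le : V c <= #|I|%:R * (K * V c * (t - s)).
  apply: le_trans (ler_sum _ (fun i _ => f_le i c cst)) _.
  by rewrite sumr_const mulr_natl.
have Vc0 : V c <= 0 by have := V_ge0 c; nra.
apply/eqP; rewrite eq_le V_ge0 andbT (le_trans _ Vc0) // Vmax //.
by rewrite in_itv /= st lexx.
Qed.

Lemma gronwall_eq0 i x : x \in `[0, 1]%R -> f i x = 0.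
Proof.
rewrite in_itv /= => /andP[x0 x1].
pose n := (Num.truncn (#|I|%:R * K)).+1; pose h := n%:R^-1 : R.
have h_gt0 : 0 < h by rewrite invr_gt0 ltr0n.
have small : #|I|%:R * K * h < 1.
  by rewrite ltr_pdivrMr ?ltr0n // mul1r truncnS_gt.
have V_eq0 k y : 0 <= y -> y <= 1 -> y <= k%:R * h -> V y = 0.
  elim: k y => [|k IH] y y0 y1 yk.
    have -> : y = 0 by apply/eqP; rewrite eq_le y0 andbT; rewrite mul0r in yk.
    by rewrite /V big1 // => j _; rewrite f0 normr0.
  have [|kh_lt_y] := leP y (k%:R * h); first exact: IH.
  have kh_ge0 : 0 <= k%:R * h by rewrite mulr_ge0 // ltW.
  apply: (V_eq0_step kh_ge0 (ltW kh_lt_y) y1).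
    rewrite -natr1 mulrDl mul1r in yk.
    by apply: le_lt_trans small; rewrite ler_wpM2l ?mulr_ge0 // lerBlDl.
  by apply: IH => //; rewrite (le_trans (ltW kh_lt_y)).
by apply: f_eq0 (V_eq0 n x x0 x1 _) i; rewrite mulfV ?lt0r_neq0 ?ltr0n.
Qed.
End Gronwall.

Lemma linear_second_order_eq0 {R : realType} {n}
    {B : 'M[R]_n} {g : R -> 'rV[R]_n} :
  {within `[0, 1], continuous g} ->
  (forall x : R, 0 < x < 1 -> derivable g x 1) ->
  {within `[0, 1], continuous (derive1 g)} ->
  (forall x : R, 0 < x < 1 -> derivable (derive1 g) x 1) ->
  (forall x : R, 0 < x < 1 -> derive1 (derive1 g) x = g x *m B) ->
  g 0 = 0 -> derive1 g 0 = 0 ->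
  forall x, x \in `[0, 1]%R -> g x = 0 /\ derive1 g x = 0.
Proof.
move=> g_cont g_der g'_cont g'_der g'' g0 g'0.
pose y (i : 'I_n + 'I_n) x :=
  match i with inl j => g x 0 j | inr j => derive1 g x 0 j end.
pose dy (i : 'I_n + 'I_n) x :=
  match i with inl j => derive1 g x 0 j | inr j => (g x *m B) 0 j end.
pose S := \sum_k \sum_l `|B k l|.
have S_ge0 : 0 <= S by do 2!apply: sumr_ge0 => ? _.
have y_sum x : \sum_i `|y i x| = \sum_k `|g x 0 k| + \sum_k `|derive1 g x 0 k|.
  by rewrite big_sumType.
have dy_le i x : 0 < x < 1 -> `|dy i x| <= (1 + S) * \sum_i `|y i x|.
  move=> _; rewrite y_sum.
  set Sg := \sum_k _; set Sg' := \sum_k _.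
  have Sg_ge0 : 0 <= Sg by apply: sumr_ge0.
  have Sg'_ge0 : 0 <= Sg' by apply: sumr_ge0.
  case: i => j /=.
    have := ler_psumr_term (fun k => `|derive1 g x 0 k|) j (fun k => normr_ge0 _).
    rewrite -/Sg'; nra.
  have := norm_mulmx_row_le (g x) B j; rewrite -/S -/Sg; nra.
have y_cont i : {within `[0, 1], continuous (y i)}.
  by case: i => j; apply: within_continuous_coord.
have y_der i (x : R) : 0 < x < 1 -> is_derive x 1 (y i) (dy i x).
  case: i => j x01 /=; first exact: is_derive_coord (g_der x x01).
  by rewrite -g'' //; exact: is_derive_coord (g'_der x x01).
have y_0 i : y i 0 = 0 by case: i => j /=; rewrite ?g0 ?g'0 mxE.
have y_eq0 := gronwall_eq0 (addr_ge0 ler01 S_ge0) y_cont y_der dy_le y_0.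
move=> x x01; split; apply/rowP => j; rewrite mxE.
  exact: (y_eq0 (inl j)).
exact: (y_eq0 (inr j)).
Qed.

Lemma expm_sqrtN1 {R : realType} {n} (J : 'M[R]_n.+1) (t : R) :
  J * J = -1 -> expm (t *: J) = cos t *: 1 + sin t *: J.
Proof.
move=> J2.
have Jpow k : J ^+ k = ((~~ odd k)%:R * (-1) ^+ k./2) *: 1
                       + ((odd k)%:R * (-1) ^+ k.-1./2) *: J.
  elim: k => [|k IH]; first by rewrite expr0 /= mul1r mul0r scale0r addr0 scale1r.
  rewrite exprSr IH mulrDl -!scalerAl mul1r J2 scalerN addrC; congr (_ + _).
  rewrite -scaleNr; congr (_ *: _); rewrite -[k]odd_double_half.
  by case: (odd k);
    rewrite /= ?odd_double ?doubleK /= ?uphalf_double ?exprS; ring.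
have term k :
    (k`!%:R)^-1 *: (t *: J) ^+ k = cos_coeff t k *: 1 + sin_coeff t k *: J.
  rewrite exprZn Jpow !(scalerDr, scalerA) /cos_coeff /sin_coeff /= -exprnP.
  by congr (_ *: _ + _ *: _); ring.
rewrite /expm.
have -> : (fun m => \sum_(k < m) ((k`!)%:R^-1 *: (t *: J) ^+ k)) =
    fun m => series (cos_coeff t) m *: 1 + series (sin_coeff t) m *: J.
  apply/funext => m; under eq_bigr do rewrite term.
  by rewrite big_split /= -!scaler_suml /series /= !big_mkord.
apply: cvg_lim => //; apply: cvgD; apply: cvgZ; try exact: cvg_cst.
  by rewrite cos.unlock; exact: is_cvg_series_cos_coeff.
by rewrite sin.unlock; exact: is_cvg_series_sin_coeff.
Qed.

Lemma det_mx2 (R : comPzRingType) (A : 'M[R]_2) :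
  \det A = A 0 0 * A 1 1 - A 0 1 * A 1 0.
Proof.
rewrite (expand_det_row _ ord0) big_ord_recl big_ord1 /cofactor !det_mx11.
rewrite !mxE /= expr0 expr1 mul1r mulN1r mulrN.
by congr (_ * _ - _ * _); congr (A _ _); apply: val_inj.
Qed.

Section Gc.
Context {R : realType}.
Implicit Types (omega : R) (c : 'rV[R]_2).

Lemma GcE omega : Gc omega = omega *: Gc 1.
Proof.
by apply/matrixP => i j; rewrite !mxE; case: ifP; rewrite ?mulr1 ?mulrN1 //;
  case: ifP; rewrite ?mulrN1 ?mulr0.
Qed.

Lemma Gc1_sqr : Gc 1 * Gc 1 = -1 :> 'M[R]_2.
Proof.
apply/matrixP => i j; rewrite !mxE !big_ord_recl big_ord0 !mxE.
by case: i => [[|[|]]] //= ?; case: j => [[|[|]]] //= ?; ring.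
Qed.

Lemma det_observability_mx c omega :
  \det (col_mx c (c *m Gc omega)) = omega * (c 0 0 ^+ 2 + c 0 1 ^+ 2).
Proof.
set cG := c *m Gc omega.
have M0 j : col_mx c cG 0 j = c 0 j.
  by rewrite -(col_mxEu c cG); congr (col_mx _ _ _ _); apply: val_inj.
have M1 j : col_mx c cG 1 j = cG 0 j.
  by rewrite -(col_mxEd c cG); congr (col_mx _ _ _ _); apply: val_inj.
rewrite det_mx2 !M0 !M1 /cG !mxE !big_ord_recl !big_ord0 !mxE /=.
have -> : lift ord0 ord0 = 1 :> 'I_2 by apply: val_inj.
ring.
Qed.

Lemma observable_Gc omega c : omega != 0 -> c != 0 -> observable (Gc omega) c.
Proof.
move=> om0 c0; apply: mxrank_unit; rewrite unitmxE unitfE det_observability_mx.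
rewrite mulf_neq0 // paddr_eq0 ?sqr_ge0 // !sqrf_eq0; apply: contra c0.
case/andP=> /eqP c00 /eqP c01; apply/eqP/rowP => -[[|[|]]] //= ?; rewrite mxE.
  by rewrite -c00; congr (c _ _); apply: val_inj.
by rewrite -c01; congr (c _ _); apply: val_inj.
Qed.

Lemma gammac_expm_Gc_neq0 omega tau :
  gammac R *m expm (- (Gc omega * tau%:M)) != 0.
Proof.
rewrite [Gc omega * _]mul_mx_scalar GcE scalerA -scaleNr expm_sqrtN1 ?Gc1_sqr //.
set t := - _; apply/negP => /eqP/rowP e.
have := e 0; have := e 1; rewrite !mxE !big_ord_recl !big_ord0 !mxE /=.
have := cos2Dsin2 t; nra.
Qed.
End Gc.

Theorem lemma4 (R : realType) (a tau : R) (htau : 0 < tau)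
  (delta : R) (hdelta : 0 < delta) (N : nat)
  (hN : forall n : nat, (N < n)%N -> a - (n%:R * pi) ^+ 2 < - delta)
  (L : 'cV[R]_N.+1) (Q : 'M[R]_N.+1) (hQ : posdef Q)
  (hLyap : posdef (- (Q *m (Amat N a + L *m Cmat R N)
                      + (Amat N a + L *m Cmat R N)^T *m Q
                      + (2 * delta) *: Q)))
  (omega : R) (homega : 0 < omega)
  (g : R -> 'rV[R]_2)
  (hg1 : forall x : R, derivable g x 1)
  (hg1c : {within `[0, 1], continuous (derive1 g)})
  (hg2 : forall x : R, 0 < x < 1 -> derivable (derive1 g) x 1)
  (hode : forall x : R, 0 < x < 1 ->
     derive1 (derive1 g) x
       = g x *m (Gc omega - a%:M) - calL L x *: g 0)
  (hbc0 : derive1 g 0 = 0)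
  (hbc1 : derive1 g 1 = - (gammac R *m expm (- (Gc omega * tau%:M)))) :
  observable (Gc omega) (g 0).
Proof.
have [g00|g0_neq0] := eqVneq (g 0) 0; last first.
  exact: observable_Gc (lt0r_neq0 homega) g0_neq0.
have g_cont : {within `[0, 1], continuous g}.
  by apply: derivable_within_continuous => x _; exact: hg1.
have g_ode x : 0 < x < 1 -> derive1 (derive1 g) x = g x *m (Gc omega - a%:M).
  by move=> x01; rewrite hode // g00 scaler0 subr0.
have [_ g'1] : g 1 = 0 /\ derive1 g 1 = 0.
  apply: (linear_second_order_eq0 g_cont (fun x _ => hg1 x) hg1c hg2 g_ode)
    => //.
  by rewrite in_itv /= ler01 lexx.
by have := gammac_expm_Gc_neq0 omega tau; rewrite -oppr_eq0 -hbc1 g'1 eqxx.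
Qed.
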